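(* Let $\epsilon_1>0$, $n\ge1$, let $u$ be a utility function on contexts of sensitivity $\Delta u\le1$ (context population size or overlap with a fixed starting context, $-\infty$ on non-matching contexts), and let $C_V$ be a starting context with $f_M(D_{C_V},V)=\mathrm{true}$. Consider the Breadth-First Search Sampling algorithm: initialize $C_M=\{C_V\}$ and $\mathrm{Visited}=\emptyset$; while $|\mathrm{Visited}|\le n$ and $C_M\ne\emptyset$: let $C=\mathrm{Exp}^{\epsilon_1}_u(D,C_M)$, add $C$ to $\mathrm{Visited}$ and remove it from $C_M$, and add to $C_M$ every context connected to $C$ that is matching for $V$ and not in $\mathrm{Visited}$. Finally output $\mathrm{Exp}^{\epsilon_1}_u(D,\mathrm{Visited})$. Then this algorithm satisfies $((2n+2)\epsilon_1,\ COE_M(\cdot,V))$-Output Constrained Differential Privacy.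
   Context: Dataset $D$ over categorical attributes $A_1,\dots,A_m$ (domain sizes $|A_i|$, all possible values) and metric attribute $M$; $t=\sum_i|A_i|$. A context is a binary vector of length $t$, $c_{ij}=1$ meaning the $j$-th value of $A_i$ is selected; $D_C$ is the set of tuples of $D$ whose value in every $A_i$ is selected by $C$. Two contexts are connected if their Hamming distance is $1$. $f_M(D_C,V)$ is a deterministic test of whether record $V$ is an outlier in $D_C$ w.r.t. $M$; a context is matching if this is true. $COE_M(D,V)$ is the set of contexts $C$ with $V\in D_C$ and $f_M(D_C,V)=\mathrm{true}$. Sensitivity $\Delta u=\max|u(D_1,r)-u(D_2,r)|$ over neighboring datasets (differing by adding/removing one record) and outputs $r$. $\mathrm{Exp}^{\epsilon}_u(D,\mathcal R)$ outputs $r\in\mathcal R$ with probability $\exp(\epsilon u(D,r)/(2\Delta u))/\sum_{r'\in\mathcal R}\exp(\epsilon u(D,r')/(2\Delta u))$. $D_1,D_2$ are $f$-neighbors if they differ by adding/removing one record and $f(D_1)=f(D_2)\ne\emptyset$; $\mathcal M$ satisfies $(\epsilon,f)$-Output Constrained Differential Privacy if $\Pr[\mathcal M(D_1)\in S]\le e^\epsilon\Pr[\mathcal M(D_2)\in S]$ for all $f$-neighbors and all output sets $S$. *)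

From HB Require Import structures.
From mathcomp Require Import all_boot all_order all_algebra.
From mathcomp Require Import reals.
From mathcomp Require Import sequences exp.
Set Implicit Arguments. Unset Strict Implicit. Unset Printing Implicit Defensive.
Import Order.TTheory GRing.Theory Num.Theory.
Local Open Scope ring_scope.

Section COE.
Variable R : realType.
(* m categorical attributes; attribute i has domain 'I_(dom i) (all values). *)
Variable m : nat.
Variable dom : 'I_m -> nat.

(* The t = sum_i |A_i| bit positions of a context: pairs (attribute i, value j). *)
Definition position := {i : 'I_m & 'I_(dom i)}.
(* A context: a binary vector of length t, i.e. the set of positions with c_ij = 1. *)
Definition context := {set position}.
(* A record: a value for each categorical attribute plus a metric value. *)
Definition record := ({dffun forall i : 'I_m, 'I_(dom i)} * R)%type.
Definition dataset := seq record.

Definition neighbors (D1 D2 : dataset) : Prop :=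
  exists r : record, perm_eq D2 (r :: D1) \/ perm_eq D1 (r :: D2).

Definition selects (C : context) (r : record) : bool :=
  [forall i : 'I_m, (Tagged (fun i => 'I_(dom i)) (r.1 i)) \in C].

Definition restrict (D : dataset) (C : context) : dataset :=
  [seq r <- D | selects C r].

Definition connected (C1 C2 : context) : bool :=
  #|(C1 :\: C2) :|: (C2 :\: C1)| == 1%N.

(* f : deterministic outlier test f_M(D_C, V). *)
Variable f : dataset -> record -> bool.

Definition COE (D : dataset) (V : record) : {set context} :=
  [set C : context | (V \in restrict D C) && f (restrict D C) V].

(* Utility u(D,C) = g D C on matching contexts, -oo elsewhere; the exponential
   mechanism weight exp(eps u / (2 Delta)) is 0 for u = -oo. *)
Variable g : dataset -> context -> R.
Variables (Delta eps : R) (V : record).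

Definition weight (D : dataset) (C : context) : R :=
  if C \in COE D V then expR (eps * g D C / (2 * Delta)) else 0.

Definition exp_mech (D : dataset) (S : {set context}) (C : context) : R :=
  if C \in S then weight D C / (\sum_(C' in S) weight D C') else 0.

Definition state := ({set context} * {set context})%type.

Variable n : nat.

Definition next_state (D : dataset) (C : context) (s : state) : state :=
  let: (CM, Vis) := s in
  ((CM :\ C) :|: [set C' | connected C C' && (C' \in COE D V) && (C' \notin C |: Vis)],
   C |: Vis).

(* One iteration of the while loop, as a Markov kernel on states. *)
Definition step (D : dataset) (s : state) (s' : state) : R :=
  let: (CM, Vis) := s in
  if (#|Vis| <= n)%N && (CM != set0) then
    \sum_(C in CM) exp_mech D CM C * (s' == next_state D C s)%:R
  else (s' == s)%:R.

(* Distribution of the state after k iterations (the loop body is the identity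
   once the loop condition fails; the loop runs at most n+1 times since
   |Visited| grows by one at every iteration). *)
Fixpoint run (D : dataset) (CV : context) (k : nat) (s : state) : R :=
  match k with
  | 0 => (s == (([set CV] : {set context}), (set0 : {set context})))%:R
  | k'.+1 => \sum_(s0 : state) run D CV k' s0 * step D s0 s
  end.

Definition bfs_sampling (D : dataset) (CV : context) (C : context) : R :=
  \sum_(s : state) run D CV n.+1 s * exp_mech D s.2 C.

End COE.

(* Every random choice of the algorithm is an exponential mechanism, and on
   COE-neighbours the set of matching contexts, hence every candidate set and
   every successor state, is the same for both datasets.  A weight
   exp(eps u / 2 Delta) moves by a factor at most exp(eps/2), so each
   normalized choice probability moves by at most exp(eps).  Composing the
   n+1 loop iterations with the final selection multiplies the factors,
   giving exp((n+2) eps) <= exp((2n+2) eps) pointwise on outputs. *)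
From HB Require Import structures.
From mathcomp Require Import all_boot all_order all_algebra.
From mathcomp Require Import reals.
From mathcomp Require Import sequences exp.
From mathcomp Require Import ring.
Set Implicit Arguments. Unset Strict Implicit.
Import Order.TTheory GRing.Theory Num.Theory.
Local Open Scope ring_scope.

Section MultiplicativeBounds.
Variable R : realFieldType.

Lemma normalized_le (I : finType) (S : {set I}) (w1 w2 : I -> R) (E : R) i :
  (forall j, 0 <= w1 j) -> (forall j, 0 <= w2 j) ->
  (forall j, w1 j <= E * w2 j) -> (forall j, w2 j <= E * w1 j) ->
  i \in S ->
  w1 i / (\sum_(j in S) w1 j) <= E * E * (w2 i / \sum_(j in S) w2 j).
Proof.
move=> w1_ge0 w2_ge0 w12 w21 iS.
have le_sum (w : I -> R) : (forall j, 0 <= w j) -> w i <= \sum_(j in S) w j.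
  by move=> w_ge0; rewrite (bigD1 i) //= lerDl sumr_ge0.
set A1 := \sum_(j in S) w1 j; set A2 := \sum_(j in S) w2 j.
have [w1i0 | w1i_neq0] := eqVneq (w1 i) 0.
  by rewrite w1i0 mul0r mulr_ge0 -?expr2 ?sqr_ge0 ?divr_ge0 ?sumr_ge0.
have w1i_gt0 : 0 < w1 i by rewrite lt0r w1i_neq0 w1_ge0.
have w2i_gt0 : 0 < w2 i.
  by rewrite lt0r w2_ge0 andbT; apply: contraTneq (w12 i) => ->; rewrite mulr0 -ltNge.
have E_gt0 : 0 < E by rewrite -(pmulr_lgt0 _ w2i_gt0) (lt_le_trans w1i_gt0).
have A1_gt0 : 0 < A1 := lt_le_trans w1i_gt0 (le_sum _ w1_ge0).
have A2_gt0 : 0 < A2 := lt_le_trans w2i_gt0 (le_sum _ w2_ge0).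
have A21 : A2 <= E * A1 by rewrite mulr_sumr ler_sum.
rewrite ler_pdivrMr //.
have -> : E * E * (w2 i / A2) * A1 = E * w2 i * (E * A1 / A2).
  by field; rewrite gt_eqF.
by rewrite -[w1 i]mulr1 ler_pM ?ler_pdivlMr ?mul1r ?w12 ?w1_ge0.
Qed.

Lemma sum_mul_le (I : finType) (P : pred I) (a1 a2 b1 b2 : I -> R) (A B : R) :
  (forall i, 0 <= a1 i) -> (forall i, 0 <= b1 i) ->
  (forall i, a1 i <= A * a2 i) -> (forall i, b1 i <= B * b2 i) ->
  \sum_(i | P i) a1 i * b1 i <= A * B * \sum_(i | P i) a2 i * b2 i.
Proof.
move=> a1_ge0 b1_ge0 a12 b12; rewrite mulr_sumr; apply: ler_sum => i _.
by rewrite mulrACA ler_pM.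
Qed.

End MultiplicativeBounds.

Section Mechanisms.
Variables (R : realType) (m : nat) (dom : 'I_m -> nat).
Variables (f : dataset R dom -> record R dom -> bool)
  (g : dataset R dom -> context dom -> R) (Delta eps : R) (n : nat)
  (V : record R dom).

Local Notation weight := (weight f g Delta eps V).
Local Notation exp_mech := (exp_mech f g Delta eps V).
Local Notation step := (step f g Delta eps V n).
Local Notation run := (run f g Delta eps V n).
Local Notation bfs_sampling := (bfs_sampling f g Delta eps V n).

Lemma weight_ge0 D C : 0 <= weight D C.
Proof. by rewrite /weight; case: ifP => // _; apply/ltW/expR_gt0. Qed.

Lemma exp_mech_ge0 D S C : 0 <= exp_mech D S C.
Proof.
rewrite /exp_mech; case: ifP => // _.
by rewrite divr_ge0 ?weight_ge0 ?sumr_ge0 // => C' _; apply: weight_ge0.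
Qed.

Lemma step_ge0 D s s' : 0 <= step D s s'.
Proof.
case: s => CM Vis; rewrite /step; case: ifP => _ //.
by rewrite sumr_ge0 // => C _; rewrite mulr_ge0 ?exp_mech_ge0.
Qed.

Lemma run_ge0 D CV k s : 0 <= run D CV k s.
Proof.
elim: k s => [|k IH] s //=.
by rewrite sumr_ge0 // => s0 _; rewrite mulr_ge0 ?IH ?step_ge0.
Qed.

Lemma bfs_sampling_ge0 D CV C : 0 <= bfs_sampling D CV C.
Proof.
by apply: sumr_ge0 => s _; rewrite mulr_ge0 ?run_ge0 ?exp_mech_ge0.
Qed.

Hypotheses (eps_gt0 : 0 < eps) (Delta_gt0 : 0 < Delta).

Lemma weight_le D1 D2 C :
  COE f D1 V = COE f D2 V -> `|g D1 C - g D2 C| <= Delta ->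
  weight D1 C <= expR (eps / 2) * weight D2 C.
Proof.
move=> eqCOE dg; rewrite /weight eqCOE; case: ifP => _; last by rewrite mulr0.
rewrite -expRD ler_expR -lerBlDr.
have -> : eps * g D1 C / (2 * Delta) - eps * g D2 C / (2 * Delta)
          = eps / 2 * ((g D1 C - g D2 C) / Delta).
  by field; rewrite gt_eqF.
apply: ler_piMr; first by rewrite divr_ge0 ?ltW.
by rewrite ler_pdivrMr // mul1r (le_trans (ler_norm _) dg).
Qed.

Variables D1 D2 : dataset R dom.
Hypothesis eqCOE : COE f D1 V = COE f D2 V.
Hypothesis dg : forall C, `|g D1 C - g D2 C| <= Delta.

Lemma exp_mech_le S C : exp_mech D1 S C <= expR eps * exp_mech D2 S C.
Proof.
rewrite /exp_mech; case: ifP => CS; last by rewrite mulr0.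
have -> : expR eps = expR (eps / 2) * expR (eps / 2) by rewrite -expRD -splitr.
apply: normalized_le => // [C'|C'|C'|C'].
- exact: weight_ge0.
- exact: weight_ge0.
- exact: weight_le.
- by apply: weight_le; rewrite // distrC.
Qed.

Lemma step_le s s' : step D1 s s' <= expR eps * step D2 s s'.
Proof.
case: s => CM Vis; rewrite /step; case: ifP => _.
  rewrite -[expR eps]mulr1; apply: sum_mul_le => [C|C|C|C].
  - exact: exp_mech_ge0.
  - exact: ler0n.
  - exact: exp_mech_le.
  - by case: s' => CM' Vis'; rewrite /next_state eqCOE mul1r.
by rewrite ler_peMl ?ler0n // -expR0 ler_expR (ltW eps_gt0).
Qed.

Lemma run_le CV k s : run D1 CV k s <= expR (k%:R * eps) * run D2 CV k s.
Proof.
elim: k s => [|k IH] s /=; first by rewrite mul0r expR0 mul1r.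
rewrite -addn1 natrD mulrDl mul1r expRD.
by apply: sum_mul_le => [s0|s0|s0|s0]; rewrite ?run_ge0 ?step_ge0 ?IH ?step_le.
Qed.

Lemma bfs_sampling_le CV C :
  bfs_sampling D1 CV C <= expR ((n.+2)%:R * eps) * bfs_sampling D2 CV C.
Proof.
rewrite -addn1 natrD mulrDl mul1r expRD.
by apply: sum_mul_le => [s|s|s|s]; rewrite ?run_ge0 ?exp_mech_ge0 ?run_le ?exp_mech_le.
Qed.

End Mechanisms.

Theorem theorem10 (R : realType) (m : nat) (dom : 'I_m -> nat)
  (f : dataset R dom -> record R dom -> bool)
  (g : dataset R dom -> context dom -> R) (Delta eps1 : R) (n : nat)
  (V : record R dom) (CV : context dom) :
  0 < eps1 -> (1 <= n)%N ->
  0 < Delta -> Delta <= 1 ->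
  (forall D1 D2 : dataset R dom, neighbors D1 D2 ->
     forall C : context dom, `|g D1 C - g D2 C| <= Delta) ->
  forall D1 D2 : dataset R dom,
    neighbors D1 D2 ->
    COE f D1 V = COE f D2 V -> COE f D1 V != set0 ->
    CV \in COE f D1 V ->
    forall S : {set context dom},
      \sum_(C in S) bfs_sampling f g Delta eps1 V n D1 CV C
        <= expR ((2 * n.+1)%:R * eps1) *
           \sum_(C in S) bfs_sampling f g Delta eps1 V n D2 CV C.
Proof.
move=> eps1_gt0 _ Delta_gt0 _ sens D1 D2 nD12 eqCOE _ _ S.
have exponent_le : expR ((n.+2)%:R * eps1) <= expR ((2 * n.+1)%:R * eps1).
  rewrite ler_expR ler_wpM2r ?(ltW eps1_gt0) // ler_nat.
  by rewrite mul2n -addnn addSn ltnS leq_addl.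
rewrite mulr_sumr; apply: ler_sum => C _.
apply: le_trans (bfs_sampling_le n eps1_gt0 Delta_gt0 eqCOE (sens _ _ nD12) CV C) _.
by apply: ler_wpM2r exponent_le; apply: bfs_sampling_ge0.
Qed.
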